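(* Let $m\in\mathbb{N}$, $d_1,\dots,d_m\in\mathbb{R}$, $\alpha_1,\dots,\alpha_m>0$, $\beta>0$ and $\nu\in\mathbb{R}$. Let $\gamma$ be a real root of the characteristic equation $$\sum_{i=1}^{m}\frac{d_i\,\Gamma(1+\gamma)}{\Gamma(1+\gamma-\alpha_i)}=\nu^2,$$ and suppose there is no positive integer $k$ such that $\gamma+\beta k$ is also a root of this equation. Then, for any constant $c_0$, the series $$u(x)=c_0\sum_{n=0}^{\infty}\frac{(-1)^n x^{\gamma+\beta n}}{\displaystyle\prod_{k=1}^{n}\left(\sum_{i=1}^{m}\frac{d_i\,\Gamma(1+\gamma+\beta k)}{\Gamma(1+\gamma+\beta k-\alpha_i)}-\nu^2\right)}$$ (where the empty product for $n=0$ equals $1$) converges pointwise for every $x>0$.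
   Context: This series is the candidate fractional power series solution of the generalized fractional Bessel equation $\sum_{i=1}^{m}d_i x^{\alpha_i}D^{\alpha_i}u(x)+(x^\beta-\nu^2)u(x)=0$, $x>0$, where $D^{\alpha}$ is the Caputo derivative: for $n-1<\alpha<n$, $n\in\mathbb{N}$, $D^{\alpha}u(x)=\frac{1}{\Gamma(n-\alpha)}\int_0^x (x-t)^{n-\alpha-1}u^{(n)}(t)\,dt$, and for $\alpha=n\in\mathbb{N}$ it is the ordinary derivative $u^{(n)}$. Quotients $\Gamma(a)/\Gamma(b)$ are understood with $1/\Gamma$ as an entire function, vanishing at the nonpositive integers. *)

From Stdlib Require Import Reals.
From Coquelicot Require Import Coquelicot.
Open Scope R_scope.

(* sum_{i=0}^{m-1} f i  (the paper's sum_{i=1}^m, indices shifted by one) *)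
Fixpoint sum_upto (m : nat) (f : nat -> R) : R :=
  match m with O => 0 | S m' => sum_upto m' f + f m' end.

Fixpoint prod_1n (n : nat) (f : nat -> R) : R :=
  match n with O => 1 | S n' => prod_1n n' f * f (S n') end.

Definition prod_0n (n : nat) (f : nat -> R) : R := prod_1n n f * f O.

(* Reciprocal Gamma function 1/Gamma, an entire function, via the
   Euler--Gauss product: 1/Gamma(x) = lim_n x(x+1)...(x+n) / (n! n^x).
   It vanishes exactly at the nonpositive integers. *)
Definition rgamma (x : R) : R :=
  real (Lim_seq (fun n => prod_0n n (fun k => x + INR k)
                          / (INR (Factorial.fact n) * Rpower (INR n) x))).

(* Gamma(a)/Gamma(b) := Gamma(a) * (1/Gamma)(b).  When a is a pole of Gamma
   (rgamma a = 0) the quotient is set to 0 by convention. *)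
Definition gamma_ratio (a b : R) : R :=
  if Req_EM_T (rgamma a) 0 then 0 else rgamma b / rgamma a.

Definition char_lhs (m : nat) (d alpha : nat -> R) (g : R) : R :=
  sum_upto m (fun i => d i * gamma_ratio (1 + g) (1 + g - alpha i)).

Definition bessel_term (m : nat) (d alpha : nat -> R) (beta nu g x : R)
  (n : nat) : R :=
  (-1) ^ n * Rpower x (g + beta * INR n)
  / prod_1n n (fun k => char_lhs m d alpha (g + beta * INR k) - nu ^ 2).

(* Via the Euler-Gauss product, 1/Gamma is positive on (0, oo) and
   Gamma(y) / Gamma(y + d) = O(y^-d) as y -> oo for every d > 0.  Hence
   Q(s, a) = Gamma(1 + s) / Gamma(1 + s - a) tends to infinity for a > 0, and
   faster the larger a is.  Grouping the terms of
   F(s) = sum_i d_i Q(s, alpha_i) by exponent, either F vanishes identically,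
   which F(gamma) = nu^2 <> F(gamma + beta) excludes, or F(s) ~ c Q(s, A) with
   c <> 0 and A > 0.  Then |F(gamma + beta n) - nu^2| -> oo, so the ratio
   x^beta / |F(gamma + beta (n + 1)) - nu^2| of consecutive terms of the series
   tends to 0 and d'Alembert's test applies. *)

From Stdlib Require Import Reals Lra Lia List.
From Coquelicot Require Import Coquelicot.
Open Scope R_scope.

Lemma ln_1p_bounds a : 0 < a -> a / (1 + a) <= ln (1 + a) <= a.
Proof.
  intros Ha. split.
  - assert (Hinv : ln (/ (1 + a)) <= / (1 + a) - 1).
    { rewrite <- (exp_ln (/ (1 + a))) at 2 by (apply Rinv_0_lt_compat; lra).
      pose proof (exp_ineq1_le (ln (/ (1 + a)))); lra. }
    rewrite ln_Rinv in Hinv by lra.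
    replace (a / (1 + a)) with (1 - / (1 + a)) by (field; lra). lra.
  - rewrite <- (ln_exp a) at 2. apply ln_le; [lra | apply exp_ineq1_le].
Qed.

Lemma exp_le x y : x <= y -> exp x <= exp y.
Proof. intros [Hlt | ->]; [left; apply exp_increasing, Hlt | right; reflexivity]. Qed.

Lemma ln_1p_inv_INR k : (1 <= k)%nat -> ln (1 + / INR k) = ln (INR (S k)) - ln (INR k).
Proof.
  intros Hk. assert (1 <= INR k) by (apply (le_INR 1); exact Hk).
  rewrite S_INR, <- ln_div by lra. f_equal. field. lra.
Qed.

Fixpoint sum_1n (n : nat) (f : nat -> R) : R :=
  match n with O => 0 | S n' => sum_1n n' f + f (S n') end.

Lemma sum_n_shift_sum_1n (f : nat -> R) n : sum_n (fun j => f (S j)) n = sum_1n (S n) f.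
Proof.
  induction n as [|n IH]; [rewrite sum_O; simpl; ring|].
  rewrite sum_Sn, IH. reflexivity.
Qed.

Definition rgamma_seq (x : R) (n : nat) : R :=
  prod_0n n (fun k => x + INR k) / (INR (Factorial.fact n) * Rpower (INR n) x).

Definition log_rising (x : R) (n : nat) : R := sum_1n n (fun k => ln (1 + x / INR k)).

Lemma prod_1n_rising_exp x n : 0 < x ->
  prod_1n n (fun k => x + INR k) = INR (Factorial.fact n) * exp (log_rising x n).
Proof.
  intros Hx. induction n as [|n IH]; [unfold log_rising; simpl; rewrite exp_0; ring|].
  cbn [prod_1n]. unfold log_rising in *. cbn [sum_1n].
  rewrite IH, exp_plus, exp_ln, fact_simpl, mult_INR.
  - assert (0 < INR (S n)) by (apply lt_0_INR; lia). field. lra.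
  - assert (0 < x / INR (S n)) by (apply Rdiv_lt_0_compat; [lra | apply lt_0_INR; lia]). lra.
Qed.

Lemma rgamma_seq_exp x n : 0 < x -> (1 <= n)%nat ->
  rgamma_seq x n = x * exp (log_rising x n - x * ln (INR n)).
Proof.
  intros Hx Hn. unfold rgamma_seq, prod_0n, Rpower.
  rewrite prod_1n_rising_exp, Rminus_def, exp_plus, exp_Ropp by exact Hx.
  assert (0 < INR (Factorial.fact n)) by (apply lt_0_INR, Factorial.lt_O_fact).
  pose proof (exp_pos (x * ln (INR n))).
  simpl INR at 2. field. lra.
Qed.

(* Logarithm of (1 + x/k) (1 + 1/k)^-x, the k-th factor of Euler's product
   for 1 / (x Gamma(x)). *)
Definition euler_log_term (x : R) (k : nat) : R := ln (1 + x / INR k) - x * ln (1 + / INR k).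

Lemma sum_euler_log_term x n :
  sum_1n n (euler_log_term x) = log_rising x n - x * ln (INR (S n)).
Proof.
  unfold log_rising. induction n as [|n IH]; [simpl; rewrite ln_1; ring|].
  cbn [sum_1n]. rewrite IH. unfold euler_log_term.
  rewrite ln_1p_inv_INR by lia. ring.
Qed.

Lemma euler_log_term_bound x k : 0 < x -> (1 <= k)%nat ->
  Rabs (euler_log_term x k) <= (x + 2 * x ^ 2) * (/ INR k - / INR (S k)).
Proof.
  intros Hx Hk. unfold euler_log_term.
  assert (HK : 1 <= INR k) by (apply (le_INR 1); exact Hk).
  rewrite S_INR. set (K := INR k) in *.
  assert (Hxk : 0 < x / K) by (apply Rdiv_lt_0_compat; lra).
  assert (Hk' : 0 < / K) by (apply Rinv_0_lt_compat; lra).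
  destruct (ln_1p_bounds _ Hxk) as [Lx Ux].
  destruct (ln_1p_bounds _ Hk') as [L1 U1].
  replace (x / K / (1 + x / K)) with (x / (K + x)) in Lx by (field; lra).
  replace (/ K / (1 + / K)) with (/ (K + 1)) in L1 by (field; lra).
  replace (/ K - / (K + 1)) with (/ (K * (K + 1))) by (field; lra).
  assert (Hinv : / (K * (K + x)) <= 2 * / (K * (K + 1))).
  { replace (2 * / (K * (K + 1))) with (/ (K * ((K + 1) / 2))) by (field; lra).
    apply Rinv_le_contravar; [apply Rmult_lt_0_compat | apply Rmult_le_compat_l]; lra. }
  assert (Hlow : x / (K + x) - x * / K = - x ^ 2 * / (K * (K + x))) by (field; lra).
  assert (Hup : x * / K - x * / (K + 1) = x * / (K * (K + 1))) by (field; lra).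
  assert (0 < / (K * (K + 1))) by (apply Rinv_0_lt_compat; nra).
  apply Rabs_le; split; nra.
Qed.

Lemma is_series_inv_telescoping : is_series (fun j => / INR (S j) - / INR (S (S j))) 1.
Proof.
  apply (is_lim_seq_ext (fun n => 1 - / INR (S (S n))) _ 1).
  - intros n. induction n as [|n IH]; [rewrite sum_O; simpl; field|].
    rewrite sum_Sn, <- IH. change plus with Rplus. ring.
  - replace (Finite 1) with (Rbar_minus 1 0) by (simpl; f_equal; ring).
    apply is_lim_seq_minus'; [apply is_lim_seq_const|].
    apply (is_lim_seq_incr_1 (fun n => / INR (S n))), (is_lim_seq_incr_1 (fun n => / INR n)).
    replace (Finite 0) with (Rbar_inv p_infty) by reflexivity.
    apply is_lim_seq_inv; [apply is_lim_seq_INR | discriminate].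
Qed.

Lemma ex_series_euler_log_term x : 0 < x -> ex_series (fun j => euler_log_term x (S j)).
Proof.
  intros Hx.
  apply (@ex_series_le R_AbsRing R_CompleteNormedModule _ (fun j => (x + 2 * x ^ 2) * (/ INR (S j) - / INR (S (S j))))).
  - intros n. apply euler_log_term_bound; [exact Hx | lia].
  - apply (@ex_series_scal_l R_AbsRing R_NormedModule (x + 2 * x ^ 2)).
    eexists. apply is_series_inv_telescoping.
Qed.

Lemma rgamma_seq_lim x : 0 < x ->
  is_lim_seq (rgamma_seq x) (x * exp (Series (fun j => euler_log_term x (S j)))).
Proof.
  intros Hx. apply is_lim_seq_incr_1.
  apply (is_lim_seq_ext
    (fun n => x * exp (sum_n (fun j => euler_log_term x (S j)) n + x * ln (1 + / INR (S n))))).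
  { intros n. rewrite rgamma_seq_exp, sum_n_shift_sum_1n, sum_euler_log_term, ln_1p_inv_INR
      by (exact Hx || lia). f_equal. f_equal. ring. }
  apply is_lim_seq_mult'; [apply is_lim_seq_const|].
  apply (is_lim_seq_continuous exp); [apply derivable_continuous_pt, derivable_pt_exp|].
  rewrite <- (Rplus_0_r (Series _)).
  apply is_lim_seq_plus'.
  { apply Series_correct, ex_series_euler_log_term, Hx. }
  replace (Finite 0) with (Finite (x * ln (1 + 0))) by (rewrite Rplus_0_r, ln_1; f_equal; ring).
  apply is_lim_seq_mult'; [apply is_lim_seq_const|].
  apply (is_lim_seq_continuous ln).
  { apply continuity_pt_filterlim, continuous_ln. lra. }
  apply is_lim_seq_plus'; [apply is_lim_seq_const|].
  replace (Finite 0) with (Rbar_inv p_infty) by reflexivity.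
  apply is_lim_seq_inv; [apply (is_lim_seq_incr_1 INR), is_lim_seq_INR | discriminate].
Qed.

Lemma rgamma_Euler x : 0 < x -> rgamma x = x * exp (Series (fun j => euler_log_term x (S j))).
Proof.
  intros Hx. unfold rgamma. fold (rgamma_seq x).
  rewrite (is_lim_seq_unique _ _ (rgamma_seq_lim x Hx)). reflexivity.
Qed.

Lemma is_lim_seq_rgamma x : 0 < x -> is_lim_seq (rgamma_seq x) (rgamma x).
Proof. intros Hx. rewrite rgamma_Euler by exact Hx. apply rgamma_seq_lim, Hx. Qed.

Lemma rgamma_gt0 x : 0 < x -> 0 < rgamma x.
Proof.
  intros Hx. rewrite rgamma_Euler by exact Hx.
  apply Rmult_lt_0_compat; [exact Hx | apply exp_pos].
Qed.

Lemma log_rising_shift_le t d n : 0 < t -> 0 < d ->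
  log_rising (t + d) n - log_rising t n <= d * (ln (INR n + t) - ln t).
Proof.
  (* ln (1 + d/(k+t)) <= d/(k+t) <= d ln (1 + 1/(k-1+t)), which telescopes. *)
  intros Ht Hd. unfold log_rising. induction n as [|n IH]; [simpl; rewrite Rplus_0_l; lra|].
  cbn [sum_1n]. rewrite S_INR. set (K := INR n) in *.
  assert (HK : 0 <= K) by apply pos_INR.
  assert (Hu : 0 < d / (K + 1 + t)) by (apply Rdiv_lt_0_compat; lra).
  assert (Hv : 0 < / (K + t)) by (apply Rinv_0_lt_compat; lra).
  replace (ln (1 + (t + d) / (K + 1))) with (ln (1 + t / (K + 1)) + ln (1 + d / (K + 1 + t))).
  2:{ rewrite <- ln_mult.
      - f_equal. field. lra.
      - assert (0 < t / (K + 1)) by (apply Rdiv_lt_0_compat; lra). lra.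
      - lra. }
  replace (ln (K + 1 + t)) with (ln (K + t) + ln (1 + / (K + t))).
  2:{ rewrite <- ln_mult by lra. f_equal. field. lra. }
  destruct (ln_1p_bounds _ Hu) as [_ U].
  destruct (ln_1p_bounds _ Hv) as [L _].
  replace (/ (K + t) / (1 + / (K + t))) with (/ (K + 1 + t)) in L by (field; lra).
  assert (d / (K + 1 + t) <= d * ln (1 + / (K + t))) by (apply Rmult_le_compat_l; lra).
  lra.
Qed.

Lemma rgamma_seq_shift_le t d n : 0 < d <= t -> (1 <= n)%nat -> t <= INR n ->
  rgamma_seq (t + d) n <= 2 * exp (d * (ln 2 - ln t)) * rgamma_seq t n.
Proof.
  intros Hdt Hn Htn.
  rewrite !rgamma_seq_exp by (lra || exact Hn).
  assert (HN : 1 <= INR n) by (apply (le_INR 1); exact Hn).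
  assert (ln (INR n + t) <= ln 2 + ln (INR n)) by (rewrite <- ln_mult by lra; apply ln_le; lra).
  pose proof (log_rising_shift_le t d n ltac:(lra) ltac:(lra)).
  assert (exp (log_rising (t + d) n - (t + d) * ln (INR n)) <=
          exp (d * (ln 2 - ln t)) * exp (log_rising t n - t * ln (INR n))).
  { rewrite <- exp_plus. apply exp_le. nra. }
  set (E := exp (d * (ln 2 - ln t))) in *. set (e := exp (log_rising t n - t * ln (INR n))) in *.
  assert (0 < E * e) by (apply Rmult_lt_0_compat; apply exp_pos).
  apply Rle_trans with ((t + d) * (E * e)); [apply Rmult_le_compat_l; lra|].
  replace (2 * E * (t * e)) with ((2 * t) * (E * e)) by ring.
  apply Rmult_le_compat_r; lra.
Qed.

Lemma rgamma_shift_le t d : 0 < d <= t ->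
  rgamma (t + d) <= 2 * exp (d * (ln 2 - ln t)) * rgamma t.
Proof.
  intros Hdt.
  destruct (proj2 (is_lim_seq_spec INR p_infty) is_lim_seq_INR t) as [N HN].
  apply (is_lim_seq_le_loc (rgamma_seq (t + d)) (fun n => 2 * exp (d * (ln 2 - ln t)) * rgamma_seq t n)
    (rgamma (t + d)) (2 * exp (d * (ln 2 - ln t)) * rgamma t)).
  - exists (S N). intros n Hn. apply rgamma_seq_shift_le; [exact Hdt | lia |].
    left. apply HN. lia.
  - apply is_lim_seq_rgamma. lra.
  - apply is_lim_seq_mult'; [apply is_lim_seq_const | apply is_lim_seq_rgamma; lra].
Qed.

Lemma is_lim_exp_log_decay a d : 0 < d ->
  is_lim (fun y => exp (d * (ln 2 - ln (y + a)))) p_infty 0.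
Proof.
  intros Hd.
  apply (is_lim_comp exp _ p_infty 0 m_infty); [apply is_lim_exp_m | | exists 0; discriminate].
  replace m_infty with (Rbar_mult d m_infty).
  2:{ rewrite Rbar_mult_comm. apply is_Rbar_mult_unique, is_Rbar_mult_m_infty_pos. exact Hd. }
  apply is_lim_scal_l.
  apply (is_lim_minus _ _ _ (ln 2) p_infty); [apply is_lim_const | | reflexivity].
  apply (is_lim_comp ln _ p_infty p_infty p_infty); [apply is_lim_ln_p | | exists 0; discriminate].
  apply (is_lim_plus _ _ _ p_infty a); [apply is_lim_id | apply is_lim_const | reflexivity].
Qed.

Lemma rgamma_shift_ratio_lim a b : a < b ->
  is_lim (fun y => rgamma (y + b) / rgamma (y + a)) p_infty 0.
Proof.
  intros Hab.
  apply (is_lim_le_le_loc (fun _ => 0) (fun y => 2 * exp ((b - a) * (ln 2 - ln (y + a))))).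
  - exists (b - 2 * a). intros y Hy.
    pose proof (rgamma_gt0 (y + a) ltac:(lra)). pose proof (rgamma_gt0 (y + b) ltac:(lra)).
    split; [apply Rlt_le, Rdiv_lt_0_compat; assumption|].
    apply Rle_div_l; [lra|].
    replace (y + b) with ((y + a) + (b - a)) by ring.
    apply rgamma_shift_le. lra.
  - apply is_lim_const.
  - replace (Finite 0) with (Rbar_mult 2 0) by (simpl; f_equal; ring).
    apply is_lim_scal_l, is_lim_exp_log_decay. lra.
Qed.

Definition gamma_quot (s a : R) : R := gamma_ratio (1 + s) (1 + s - a).

Lemma gamma_quot_eq s a : -1 < s -> gamma_quot s a = rgamma (1 + s - a) / rgamma (1 + s).
Proof.
  intros Hs. unfold gamma_quot, gamma_ratio.
  pose proof (rgamma_gt0 (1 + s) ltac:(lra)).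
  destruct (Req_EM_T (rgamma (1 + s)) 0); [lra | reflexivity].
Qed.

Lemma gamma_quot_gt0 s a : -1 < s -> a < 1 + s -> 0 < gamma_quot s a.
Proof.
  intros Hs Ha. rewrite gamma_quot_eq by exact Hs.
  apply Rdiv_lt_0_compat; apply rgamma_gt0; lra.
Qed.

Lemma gamma_quot_ratio_lim a A : a < A ->
  is_lim (fun s => gamma_quot s a / gamma_quot s A) p_infty 0.
Proof.
  intros HaA.
  apply (is_lim_ext_loc (fun s => rgamma (s + (1 - a)) / rgamma (s + (1 - A)))).
  - exists (Rmax (-1) (A - 1)). intros s Hs.
    pose proof (Rmax_l (-1) (A - 1)). pose proof (Rmax_r (-1) (A - 1)).
    rewrite !gamma_quot_eq by lra.
    pose proof (rgamma_gt0 (1 + s) ltac:(lra)). pose proof (rgamma_gt0 (1 + s - A) ltac:(lra)).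
    replace (s + (1 - a)) with (1 + s - a) by ring.
    replace (s + (1 - A)) with (1 + s - A) by ring.
    field. lra.
  - apply rgamma_shift_ratio_lim. lra.
Qed.

Lemma gamma_quot_inv_lim A : 0 < A -> is_lim (fun s => / gamma_quot s A) p_infty 0.
Proof.
  intros HA. apply (is_lim_ext_loc (fun s => gamma_quot s 0 / gamma_quot s A)).
  - exists (-1). intros s Hs.
    rewrite (gamma_quot_eq s 0), Rminus_0_r, Rdiv_diag by (lra || apply Rgt_not_eq, rgamma_gt0; lra).
    apply Rmult_1_l.
  - apply gamma_quot_ratio_lim, HA.
Qed.

(* [l] lists the pairs (d_i, alpha_i). *)
Definition gamma_comb (l : list (R * R)) (s : R) : R :=
  fold_right (fun p acc => fst p * gamma_quot s (snd p) + acc) 0 l.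

Lemma gamma_comb_app l1 l2 s : gamma_comb (l1 ++ l2) s = gamma_comb l1 s + gamma_comb l2 s.
Proof. induction l1 as [|p l1 IH]; simpl; [ring | rewrite IH; ring]. Qed.

Lemma char_lhs_gamma_comb m d alpha s :
  char_lhs m d alpha s = gamma_comb (map (fun i => (d i, alpha i)) (seq 0 m)) s.
Proof.
  unfold char_lhs. induction m as [|m IH]; [reflexivity|].
  rewrite seq_S, map_app, gamma_comb_app, <- IH. simpl. unfold gamma_quot. ring.
Qed.

Lemma gamma_comb_negligible A r : (forall p, In p r -> snd p < A) ->
  is_lim (fun s => gamma_comb r s / gamma_quot s A) p_infty 0.
Proof.
  induction r as [|[c a] r IH]; intros Hr.
  - apply (is_lim_ext (fun _ => 0)); [intros s; simpl; unfold Rdiv; ring | apply is_lim_const].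
  - apply (is_lim_ext (fun s => c * (gamma_quot s a / gamma_quot s A) + gamma_comb r s / gamma_quot s A)).
    { intros s. simpl. unfold Rdiv. ring. }
    replace (Finite 0) with (Finite (c * 0 + 0)) by (f_equal; ring).
    apply is_lim_plus'.
    + apply (is_lim_scal_l _ c _ 0), gamma_quot_ratio_lim, (Hr (c, a)), in_eq.
    + apply IH. intros p Hp. apply Hr, in_cons, Hp.
Qed.

Definition coef_at (A : R) (l : list (R * R)) : R :=
  fold_right (fun p acc => (if Req_EM_T (snd p) A then fst p else 0) + acc) 0 l.

Definition drop_exponent (A : R) (l : list (R * R)) : list (R * R) :=
  filter (fun p => if Req_EM_T (snd p) A then false else true) l.

Lemma gamma_comb_split A l s :
  gamma_comb l s = coef_at A l * gamma_quot s A + gamma_comb (drop_exponent A l) s.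
Proof.
  induction l as [|p l IH]; simpl; [ring|].
  destruct (Req_EM_T (snd p) A) as [E | E]; simpl; rewrite IH; [rewrite E |]; ring.
Qed.

Lemma In_drop_exponent A l p : In p (drop_exponent A l) <-> In p l /\ snd p <> A.
Proof.
  unfold drop_exponent. rewrite filter_In.
  destruct (Req_EM_T (snd p) A); intuition discriminate.
Qed.

Lemma drop_exponent_length_lt A l q : In q l -> snd q = A ->
  (length (drop_exponent A l) < length l)%nat.
Proof.
  intros Hq HqA. unfold drop_exponent.
  pose proof (filter_length_le (fun p => if Req_EM_T (snd p) A then false else true) l).
  enough (length (filter (fun p => if Req_EM_T (snd p) A then false else true) l) <> length l) by lia.
  intros E. apply filter_length_forallb in E.
  rewrite forallb_forall in E. specialize (E q Hq).
  destruct (Req_EM_T (snd q) A); [discriminate | contradiction].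
Qed.

Lemma exists_argmax {T : Type} (f : T -> R) (x : T) (l : list T) :
  exists q, In q (x :: l) /\ forall p, In p (x :: l) -> f p <= f q.
Proof.
  induction l as [|y l IH].
  - exists x. split; [apply in_eq|]. intros p [-> | []]. lra.
  - destruct IH as [q [Hq Hmax]].
    destruct (Rle_dec (f y) (f q)) as [Hyq | Hqy].
    + exists q. split; [destruct Hq as [-> | Hq]; [left | right; right]; auto|].
      intros p [-> | [-> | Hp]]; [apply Hmax, in_eq | exact Hyq | apply Hmax, in_cons, Hp].
    + exists y. split; [right; left; reflexivity|].
      intros p [-> | [-> | Hp]]; [pose proof (Hmax p (in_eq _ _)) | | pose proof (Hmax p (in_cons _ _ _ Hp))]; lra.
Qed.

Lemma gamma_comb_asymptotics l : (forall p, In p l -> 0 < snd p) ->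
  (forall s, gamma_comb l s = 0) \/
  exists A c, 0 < A /\ c <> 0 /\ is_lim (fun s => gamma_comb l s / gamma_quot s A) p_infty c.
Proof.
  induction l as [l IH] using (Wf_nat.induction_ltof1 _ (@length (R * R))). intros Hpos.
  destruct l as [|p0 l0]; [left; reflexivity|].
  destruct (exists_argmax snd p0 l0) as [q [Hq Hmax]].
  set (l := p0 :: l0) in *. set (A := snd q).
  assert (HA : 0 < A) by (apply Hpos, Hq).
  assert (Hr : forall p, In p (drop_exponent A l) -> 0 < snd p /\ snd p < A).
  { intros p [Hp HpA]%In_drop_exponent. split; [apply Hpos, Hp|].
    specialize (Hmax p Hp). fold A in Hmax. lra. }
  destruct (Req_dec (coef_at A l) 0) as [Hc | Hc].
  - assert (Hl : forall s, gamma_comb l s = gamma_comb (drop_exponent A l) s).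
    { intros s. rewrite (gamma_comb_split A), Hc. ring. }
    destruct (IH (drop_exponent A l)) as [Z | [A' [c' [HA' [Hc' Hlim]]]]].
    + apply (drop_exponent_length_lt A l q Hq eq_refl).
    + intros p Hp. apply Hr, Hp.
    + left. intros s. rewrite Hl. apply Z.
    + right. exists A', c'. split; [exact HA'|]. split; [exact Hc'|].
      apply (is_lim_ext (fun s => gamma_comb (drop_exponent A l) s / gamma_quot s A')); [|exact Hlim].
      intros s. rewrite Hl. reflexivity.
  - right. exists A, (coef_at A l). split; [exact HA|]. split; [exact Hc|].
    apply (is_lim_ext_loc (fun s => coef_at A l + gamma_comb (drop_exponent A l) s / gamma_quot s A)).
    + exists A. intros s Hs. pose proof (gamma_quot_gt0 s A ltac:(lra) ltac:(lra)).
      rewrite (gamma_comb_split A l s). field. lra.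
    + replace (Finite (coef_at A l)) with (Finite (coef_at A l + 0)) by (f_equal; ring).
      apply is_lim_plus'; [apply is_lim_const|].
      apply gamma_comb_negligible. intros p Hp. apply Hr, Hp.
Qed.

Lemma gamma_comb_sub_inv_lim l A c v : 0 < A -> c <> 0 ->
  is_lim (fun s => gamma_comb l s / gamma_quot s A) p_infty c ->
  is_lim (fun s => / (gamma_comb l s - v)) p_infty 0.
Proof.
  intros HA Hc Hlim.
  apply (is_lim_ext_loc
    (fun s => / gamma_quot s A * / (gamma_comb l s / gamma_quot s A - v * / gamma_quot s A))).
  - exists A. intros s Hs. pose proof (gamma_quot_gt0 s A ltac:(lra) ltac:(lra)).
    rewrite <- Rinv_mult. f_equal. field. lra.
  - replace (Finite 0) with (Rbar_mult 0 (Rbar_inv (c - v * 0))) by (simpl; f_equal; ring).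
    apply is_lim_mult; [apply gamma_quot_inv_lim, HA | | simpl; exact I].
    apply is_lim_inv; [| simpl; intros E; apply Hc; injection E; lra].
    apply (is_lim_minus _ _ _ c (v * 0)); [exact Hlim | | reflexivity].
    apply (is_lim_scal_l _ v _ 0), gamma_quot_inv_lim, HA.
Qed.

Lemma ex_series_power_div_prod (D : nat -> R) (x g beta : R) :
  (forall k, (1 <= k)%nat -> D k <> 0) ->
  is_lim_seq (fun n => / D (S n)) 0 ->
  ex_series (fun n => (-1) ^ n * Rpower x (g + beta * INR n) / prod_1n n D).
Proof.
  intros HD Hlim.
  set (b := fun n => (-1) ^ n * Rpower x (g + beta * INR n) / prod_1n n D).
  assert (Hprod : forall n, prod_1n n D <> 0).
  { induction n as [|n IH]; simpl; [lra|].
    apply Rmult_integral_contrapositive_currified; [exact IH | apply HD; lia]. }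
  assert (Hpow : forall y, Rpower x y <> 0) by (intros y; apply Rgt_not_eq, exp_pos).
  assert (Hsign : forall n, (-1) ^ n <> 0) by (intros n; apply pow_nonzero; lra).
  assert (Hb : forall n, b n <> 0).
  { intros n. unfold b, Rdiv.
    repeat apply Rmult_integral_contrapositive_currified; auto using Rinv_neq_0_compat. }
  assert (Hratio : forall n, Rabs (b (S n) / b n) = Rpower x beta * Rabs (/ D (S n))).
  { intros n. unfold b. cbn [pow prod_1n].
    rewrite S_INR, Rmult_plus_distr_l, Rmult_1_r, <- Rplus_assoc, Rpower_plus.
    pose proof (Hprod n). pose proof (HD (S n) ltac:(lia)). pose proof (Hpow (g + beta * INR n)).
    pose proof (Hsign n).
    replace (_ / _) with (- (Rpower x beta * / D (S n))) by (field; auto).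
    rewrite Rabs_Ropp, Rabs_mult, (Rabs_pos_eq (Rpower x beta)); [reflexivity|].
    apply Rlt_le, exp_pos. }
  apply ex_series_Rabs, (ex_series_DAlembert b 0); [lra | exact Hb |].
  apply (is_lim_seq_ext _ _ _ (fun n => eq_sym (Hratio n))).
  replace (Finite 0) with (Finite (Rpower x beta * Rabs 0)) by (rewrite Rabs_R0; f_equal; ring).
  apply is_lim_seq_mult'; [apply is_lim_seq_const | apply (is_lim_seq_abs _ 0), Hlim].
Qed.

Theorem lemma2p1 (m : nat) (d alpha : nat -> R) (beta nu g c0 : R) :
  (forall i : nat, (i < m)%nat -> 0 < alpha i) ->
  0 < beta ->
  char_lhs m d alpha g = nu ^ 2 ->
  (forall k : nat, (1 <= k)%nat -> char_lhs m d alpha (g + beta * INR k) <> nu ^ 2) ->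
  forall x : R, 0 < x ->
    ex_series (fun n => c0 * bessel_term m d alpha beta nu g x n).
Proof.
  (* [Rpower x y = exp (y * ln x)] never vanishes. *)
  intros Halpha Hbeta Hg Hk x _.
  set (l := map (fun i => (d i, alpha i)) (seq 0 m)).
  assert (Hpos : forall p, In p l -> 0 < snd p).
  { intros p [i [<- Hi%in_seq]]%in_map_iff. apply Halpha. lia. }
  destruct (gamma_comb_asymptotics l Hpos) as [Hzero | [A [c [HA [Hc Hlim]]]]].
  { exfalso. apply (Hk 1%nat (le_n 1)).
    rewrite <- Hg, !char_lhs_gamma_comb. fold l. rewrite !Hzero. reflexivity. }
  apply (@ex_series_scal_l R_AbsRing R_NormedModule c0).
  apply ex_series_power_div_prod.
  - intros k Hk1 E. apply (Hk k Hk1). lra.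
  - apply (is_lim_comp_seq (fun s => / (char_lhs m d alpha s - nu ^ 2)) _ p_infty 0).
    + apply (is_lim_ext (fun s => / (gamma_comb l s - nu ^ 2))).
      { intros s. rewrite char_lhs_gamma_comb. reflexivity. }
      apply (gamma_comb_sub_inv_lim l A c), Hlim; assumption.
    + exists O. intros n _. discriminate.
    + apply (is_lim_seq_plus _ _ g p_infty); [apply is_lim_seq_const | | reflexivity].
      replace p_infty with (Rbar_mult beta p_infty).
      2:{ apply is_Rbar_mult_unique, is_Rbar_mult_sym, is_Rbar_mult_p_infty_pos. exact Hbeta. }
      apply is_lim_seq_scal_l, (is_lim_seq_incr_1 INR), is_lim_seq_INR.
Qed.
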